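(* Let $\alpha$ be a sentence, $\phi,\psi,\beta$ formulas, and $\Gamma$ a set of formulas. If $\Gamma,\alpha\vdash\phi$ and $\Gamma,\beta\vdash\psi$, then $\Gamma,\alpha\vee\beta\vdash\phi\vee\psi$.
   Context: Fix a countable predicate language $\mathcal L$ consisting of variables, constant symbols and predicate symbols (so terms are just variables and constants), with connectives $\to$, $\&$, the propositional constant $0$ and quantifiers $\forall,\exists$. Abbreviations: $\phi\wedge\psi$ is $\phi\&(\phi\to\psi)$; $\phi\vee\psi$ is $((\phi\to\psi)\to\psi)\wedge((\psi\to\phi)\to\phi)$; $\neg\phi$ is $\phi\to 0$; $1$ is $0\to 0$; $\beta^n$ is $\beta\&\cdots\&\beta$ ($n$ factors). $\phi(x/t)$ denotes the result of substituting the term $t$ for the free occurrences of $x$ in $\phi$. A sentence is a formula with no free variables; a theory is any set of formulas. Hájek's basic predicate logic BL$\forall$ has the axiom schemata (A1) $(\phi\to\psi)\to((\psi\to\chi)\to(\phi\to\chi))$; (A2) $(\phi\&\psi)\to\phi$; (A3) $(\phi\&\psi)\to(\psi\&\phi)$; (A4) $(\phi\&(\phi\to\psi))\to(\psi\&(\psi\to\phi))$; (A5) $(\phi\to(\psi\to\chi))\to((\phi\&\psi)\to\chi)$; (A6) $((\phi\&\psi)\to\chi)\to(\phi\to(\psi\to\chi))$; (A7) $((\phi\to\psi)\to\chi)\to(((\psi\to\phi)\to\chi)\to\chi)$; (A8) $0\to\phi$; ($\forall$1) $\forall x\phi\to\phi(x/t)$ and ($\exists$1) $\phi(x/t)\to\exists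 x\phi$, for $t$ substitutable for $x$ in $\phi$; ($\forall$2) $\forall x(\phi\to\psi)\to(\phi\to\forall x\psi)$, ($\exists$2) $\forall x(\psi\to\phi)\to(\exists x\psi\to\phi)$ and (Lin) $\forall x(\psi\vee\phi)\to((\forall x\psi)\vee\phi)$, each with $x$ not free in $\phi$; its rules are modus ponens (from $\phi$ and $\phi\to\psi$ infer $\psi$) and generalization (from $\phi$ infer $\forall x\phi$). The logic $\vdash$ extends BL$\forall$ by the axiom schema (RC) $\forall x(\chi\&\chi)\to((\forall x\chi)\&(\forall x\chi))$ for every formula $\chi$, and the infinitary rule (Inf): from all of $\phi\vee(\alpha\to\beta^n)$, $n\in\mathbb N$, infer $\phi\vee(\alpha\to(\alpha\&\beta))$, where $\phi,\alpha,\beta$ are sentences. A proof from $\Gamma$ is a sequence $(\phi_i)_{i\le\xi}$ indexed by the ordinals up to some ordinal $\xi$ such that each $\phi_i$ is an axiom of BL$\forall$, an instance of (RC), a member of $\Gamma$, or is obtained from formulas in $\{\phi_j: j<i\}$ by modus ponens, generalization, or (Inf). $\Gamma\vdash\phi$ means there is a proof from $\Gamma$ whose last member is $\phi$; $\Gamma,\psi\vdash\phi$ means $\Gamma\cup\{\psi\}\vdash\phi$. *)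

(* Hajek's BL-forall extended by (RC) and the infinitary rule (Inf). *)
From Stdlib Require Import List Arith PeanoNat.
Import ListNotations.

Inductive term : Type :=
| tvar : nat -> term
| tconst : nat -> term.

Inductive form : Type :=
| fatom : nat -> list term -> form
| fimp : form -> form -> form
| fconj : form -> form -> form      (* strong conjunction & *)
| fzero : form
| fall : nat -> form -> form
| fex : nat -> form -> form.

Definition fwedge (p q : form) : form := fconj p (fimp p q).
Definition fvee (p q : form) : form :=
  fwedge (fimp (fimp p q) q) (fimp (fimp q p) p).
Definition fneg (p : form) : form := fimp p fzero.
Definition fone : form := fimp fzero fzero.
(* fpow b n = b & ... & b with (n+1) factors, i.e. beta^(n+1) *)
Fixpoint fpow (b : form) (n : nat) : form :=
  match n with
  | 0 => b
  | S k => fconj b (fpow b k)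
  end.

Definition term_has_var (x : nat) (t : term) : bool :=
  match t with tvar y => Nat.eqb x y | tconst _ => false end.

Fixpoint free_in (x : nat) (p : form) : bool :=
  match p with
  | fatom _ ts => existsb (term_has_var x) ts
  | fimp a b | fconj a b => free_in x a || free_in x b
  | fzero => false
  | fall y a | fex y a => if Nat.eqb x y then false else free_in x a
  end.

Definition sentence (p : form) : Prop := forall x, free_in x p = false.

Definition subst_term (x : nat) (t s : term) : term :=
  match s with
  | tvar y => if Nat.eqb x y then t else s
  | tconst _ => s
  end.

Fixpoint subst (x : nat) (t : term) (p : form) : form :=
  match p with
  | fatom P ts => fatom P (map (subst_term x t) ts)
  | fimp a b => fimp (subst x t a) (subst x t b)
  | fconj a b => fconj (subst x t a) (subst x t b)
  | fzero => fzero
  | fall y a => if Nat.eqb x y then p else fall y (subst x t a)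
  | fex y a => if Nat.eqb x y then p else fex y (subst x t a)
  end.

Fixpoint substitutable (x : nat) (t : term) (p : form) : bool :=
  match p with
  | fatom _ _ => true
  | fimp a b | fconj a b => substitutable x t a && substitutable x t b
  | fzero => true
  | fall y a | fex y a =>
      if Nat.eqb x y then true
      else (negb (free_in x a) || negb (term_has_var y t)) && substitutable x t a
  end.

Inductive axiom : form -> Prop :=
| ax1 p q r : axiom (fimp (fimp p q) (fimp (fimp q r) (fimp p r)))
| ax2 p q : axiom (fimp (fconj p q) p)
| ax3 p q : axiom (fimp (fconj p q) (fconj q p))
| ax4 p q : axiom (fimp (fconj p (fimp p q)) (fconj q (fimp q p)))
| ax5 p q r : axiom (fimp (fimp p (fimp q r)) (fimp (fconj p q) r))
| ax6 p q r : axiom (fimp (fimp (fconj p q) r) (fimp p (fimp q r)))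
| ax7 p q r : axiom (fimp (fimp (fimp p q) r) (fimp (fimp (fimp q p) r) r))
| ax8 p : axiom (fimp fzero p)
| ax_all1 x t p : substitutable x t p = true ->
    axiom (fimp (fall x p) (subst x t p))
| ax_ex1 x t p : substitutable x t p = true ->
    axiom (fimp (subst x t p) (fex x p))
| ax_all2 x p q : free_in x p = false ->
    axiom (fimp (fall x (fimp p q)) (fimp p (fall x q)))
| ax_ex2 x p q : free_in x p = false ->
    axiom (fimp (fall x (fimp q p)) (fimp (fex x q) p))
| ax_lin x p q : free_in x p = false ->
    axiom (fimp (fall x (fvee q p)) (fvee (fall x q) p))
| ax_rc x c : axiom (fimp (fall x (fconj c c)) (fconj (fall x c) (fall x c))).

Definition theory := form -> Prop.
Definition add (G : theory) (a : form) : theory := fun f => G f \/ f = a.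

(* This is exactly the set of last members of (ordinal-indexed) proofs. *)
Inductive prv (G : theory) : form -> Prop :=
| prv_ax p : axiom p -> prv G p
| prv_hyp p : G p -> prv G p
| prv_mp p q : prv G p -> prv G (fimp p q) -> prv G q
| prv_gen x p : prv G p -> prv G (fall x p)
| prv_inf p a b : sentence p -> sentence a -> sentence b ->
    (forall n, prv G (fvee p (fimp a (fpow b n)))) ->
    prv G (fvee p (fimp a (fconj a b))).

(* The heart of the argument is a disjunctive form of the deduction theorem:
   if [chi] is a sentence and [Gamma, alpha |- phi], then
   [Gamma, alpha v chi |- phi v chi].  It is proved by induction on the
   derivation: [- v chi] commutes with modus ponens, with generalization by
   (Lin) since [chi] has no free variables, and with (Inf) because (Inf) already
   carries a side disjunct which can absorb [chi].  The theorem follows by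
   applying this twice, once on each side, after replacing [phi] and [beta] by
   their universal closures so that every side disjunct is a sentence. *)

From Stdlib Require Import List PeanoNat Bool.
Import ListNotations.

Local Notation "a =>> b" := (fimp a b) (at level 90, right associativity).

Section Calculus.

Variable G : theory.

Lemma imp_trans a b c : prv G (a =>> b) -> prv G (b =>> c) -> prv G (a =>> c).
Proof.
  intros Hab Hbc. apply (prv_mp _ _ _ Hbc).
  apply (prv_mp _ _ _ Hab). apply prv_ax, ax1.
Qed.

Lemma imp_suffix a b c : prv G (a =>> b) -> prv G ((b =>> c) =>> (a =>> c)).
Proof. intros Hab. apply (prv_mp _ _ _ Hab). apply prv_ax, ax1. Qed.

Lemma imp_weak a b : prv G (a =>> (b =>> a)).
Proof. apply (prv_mp _ (fconj a b =>> a)); apply prv_ax; constructor. Qed.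

Lemma imp_exch_thm a b c : prv G ((a =>> (b =>> c)) =>> (b =>> (a =>> c))).
Proof.
  eapply imp_trans. { apply prv_ax, ax5. }
  eapply imp_trans. { apply imp_suffix, prv_ax, (ax3 b a). }
  apply prv_ax, ax6.
Qed.

Lemma imp_exch a b c : prv G (a =>> (b =>> c)) -> prv G (b =>> (a =>> c)).
Proof. intros H. exact (prv_mp _ _ _ H (imp_exch_thm a b c)). Qed.

Lemma imp_refl a : prv G (a =>> a).
Proof.
  apply (prv_mp _ fone). { apply prv_ax, ax8. }
  apply imp_exch, imp_weak.
Qed.

Lemma imp_assertion a b : prv G (a =>> ((a =>> b) =>> b)).
Proof. apply imp_exch, imp_refl. Qed.

Lemma imp_prefix a b c : prv G ((b =>> c) =>> ((a =>> b) =>> (a =>> c))).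
Proof. apply imp_exch, prv_ax, ax1. Qed.

Lemma conj_pair a b : prv G (a =>> (b =>> fconj a b)).
Proof. apply (prv_mp _ _ _ (imp_refl (fconj a b))), prv_ax, ax6. Qed.

Lemma wedge_elim_l a b : prv G (fwedge a b =>> a).
Proof. apply prv_ax, ax2. Qed.

Lemma wedge_elim_r a b : prv G (fwedge a b =>> b).
Proof. eapply imp_trans; [apply prv_ax, (ax4 a b) | apply prv_ax, ax2]. Qed.

Lemma wedge_intro h a b :
  prv G (h =>> a) -> prv G (h =>> b) -> prv G (h =>> fwedge a b).
Proof.
  intros Ha Hb.
  assert (Hab : prv G ((a =>> b) =>> (h =>> fwedge a b))).
  { apply imp_exch. eapply imp_trans; [exact Ha | apply conj_pair]. }
  (* if [b -> a], pair [b] with [b -> a] and turn it into [a & (a -> b)] by (A4) *)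
  assert (Hba : prv G ((b =>> a) =>> (h =>> fwedge a b))).
  { apply imp_exch. eapply imp_trans.
    - eapply imp_trans; [exact Hb | apply conj_pair].
    - apply (prv_mp _ _ _ (prv_ax _ _ (ax4 b a))), imp_prefix. }
  apply (prv_mp _ _ _ Hba). apply (prv_mp _ _ _ Hab). apply prv_ax, ax7.
Qed.

Lemma vee_elim_thm a b c :
  prv G ((a =>> c) =>> ((b =>> c) =>> (fvee a b =>> c))).
Proof.
  assert (Hb : prv G ((b =>> c) =>> ((a =>> b) =>> (fvee a b =>> c)))).
  { eapply imp_trans; [apply imp_prefix | apply imp_suffix, imp_exch, wedge_elim_l]. }
  assert (Ha : prv G ((a =>> c) =>> ((b =>> a) =>> (fvee a b =>> c)))).
  { eapply imp_trans; [apply imp_prefix | apply imp_suffix, imp_exch, wedge_elim_r]. }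
  eapply imp_trans; [exact Ha |].
  apply imp_exch. eapply imp_trans; [exact Hb | apply prv_ax, ax7].
Qed.

Lemma vee_elim a b c :
  prv G (a =>> c) -> prv G (b =>> c) -> prv G (fvee a b =>> c).
Proof.
  intros Ha Hb. apply (prv_mp _ _ _ Hb).
  apply (prv_mp _ _ _ Ha), vee_elim_thm.
Qed.

Lemma vee_intro_l a b : prv G (a =>> fvee a b).
Proof. apply wedge_intro; [apply imp_assertion | apply imp_weak]. Qed.

Lemma vee_comm a b : prv G (fvee a b =>> fvee b a).
Proof. apply prv_ax, ax4. Qed.

Lemma vee_intro_r a b : prv G (b =>> fvee a b).
Proof. eapply imp_trans; [apply vee_intro_l | apply vee_comm]. Qed.

Lemma vee_mono_l a b c : prv G (a =>> b) -> prv G (fvee a c =>> fvee b c).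
Proof.
  intros Hab. apply vee_elim.
  - eapply imp_trans; [exact Hab | apply vee_intro_l].
  - apply vee_intro_r.
Qed.

Lemma vee_mp a b c :
  prv G (fvee a c) -> prv G (fvee (a =>> b) c) -> prv G (fvee b c).
Proof.
  intros Ha Hab.
  assert (Himp : prv G ((a =>> b) =>> (fvee a c =>> fvee b c))).
  { eapply imp_trans.
    - apply (prv_mp _ _ _ (vee_intro_l b c)), imp_prefix.
    - apply (prv_mp _ _ _ (vee_intro_r b c)), imp_exch, vee_elim_thm. }
  assert (Hc : prv G (c =>> (fvee a c =>> fvee b c))).
  { eapply imp_trans; [apply (vee_intro_r b c) | apply imp_weak]. }
  apply (prv_mp _ _ _ Ha). apply (prv_mp _ _ _ Hab). apply vee_elim; assumption.
Qed.

Lemma vee_swap a b c : prv G (fvee (fvee a b) c =>> fvee (fvee a c) b).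
Proof.
  repeat apply vee_elim.
  - eapply imp_trans; [apply (vee_intro_l a c) | apply vee_intro_l].
  - apply vee_intro_r.
  - eapply imp_trans; [apply (vee_intro_r a c) | apply vee_intro_l].
Qed.

End Calculus.

Lemma prv_cut G G' p : prv G' p -> (forall f, G' f -> prv G f) -> prv G p.
Proof.
  intros H HG. induction H.
  - apply prv_ax; assumption.
  - auto.
  - exact (prv_mp _ _ _ IHprv1 IHprv2).
  - apply prv_gen; assumption.
  - apply prv_inf; assumption.
Qed.

Lemma prv_add_new G a : prv (add G a) a.
Proof. apply prv_hyp. right. reflexivity. Qed.

Lemma prv_add_old G a f : G f -> prv (add G a) f.
Proof. intros Hf. apply prv_hyp. left. exact Hf. Qed.

Lemma prv_add_cut G a b p : prv (add G a) p -> prv (add G b) a -> prv (add G b) p.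
Proof.
  intros Hp Ha. apply (prv_cut _ _ _ Hp).
  intros f [Hf | ->]; [apply prv_add_old, Hf | exact Ha].
Qed.

Lemma sentence_fvee p q : sentence p -> sentence q -> sentence (fvee p q).
Proof. intros Hp Hq x. simpl. rewrite Hp, Hq. reflexivity. Qed.

Lemma prv_add_vee G a c p :
  sentence c -> prv (add G a) p -> prv (add G (fvee a c)) (fvee p c).
Proof.
  intros Hc H. induction H as [p Hax | p Hp | p q _ IHp _ IHpq | x p _ IHp
                             | p a' b Hp Ha' Hb _ IHn].
  - apply (prv_mp _ _ _ (prv_ax _ _ Hax)), vee_intro_l.
  - destruct Hp as [Hp | ->].
    + apply (prv_mp _ _ _ (prv_add_old _ _ _ Hp)), vee_intro_l.
    + apply prv_add_new.
  - exact (vee_mp _ _ _ _ IHp IHpq).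
  - apply (prv_mp _ _ _ (prv_gen _ x _ IHp)), prv_ax, ax_lin, Hc.
  - apply (prv_mp _ (fvee (fvee p c) (a' =>> fconj a' b))); [| apply vee_swap].
    apply prv_inf; [apply sentence_fvee; assumption | assumption | assumption |].
    intros n. apply (prv_mp _ _ _ (IHn n)), vee_swap.
Qed.

Fixpoint close (l : list nat) (p : form) : form :=
  match l with
  | [] => p
  | x :: l' => fall x (close l' p)
  end.

Fixpoint free_vars_terms (ts : list term) : list nat :=
  match ts with
  | [] => []
  | tvar y :: ts' => y :: free_vars_terms ts'
  | tconst _ :: ts' => free_vars_terms ts'
  end.

Fixpoint free_vars (p : form) : list nat :=
  match p with
  | fatom _ ts => free_vars_terms ts
  | fimp a b | fconj a b => free_vars a ++ free_vars b
  | fzero => []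
  | fall _ a | fex _ a => free_vars a
  end.

Definition closure (p : form) : form := close (free_vars p) p.

Lemma subst_var_id x p : subst x (tvar x) p = p.
Proof.
  induction p; simpl; try congruence.
  - f_equal. induction l as [|t l IH]; simpl; [reflexivity |]. rewrite IH. f_equal.
    destruct t as [m | m]; simpl; [| reflexivity].
    destruct (Nat.eqb_spec x m); subst; reflexivity.
  - destruct (Nat.eqb x n); congruence.
  - destruct (Nat.eqb x n); congruence.
Qed.

Lemma substitutable_var_id x p : substitutable x (tvar x) p = true.
Proof.
  induction p; simpl; auto; try (rewrite IHp1, IHp2; reflexivity);
    destruct (Nat.eqb_spec x n); auto; rewrite IHp;
    destruct (Nat.eqb_spec n x); try congruence; rewrite orb_true_r; reflexivity.
Qed.

Lemma close_elim G l p : prv G (close l p =>> p).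
Proof.
  induction l as [| x l IH]; simpl; [apply imp_refl |].
  eapply imp_trans; [| exact IH].
  pose proof (ax_all1 x (tvar x) (close l p) (substitutable_var_id _ _)) as Hinst.
  rewrite subst_var_id in Hinst. apply prv_ax, Hinst.
Qed.

Lemma close_intro G l p : prv G p -> prv G (close l p).
Proof. intros H. induction l; simpl; [exact H | apply prv_gen; assumption]. Qed.

Lemma in_free_vars x p : free_in x p = true -> In x (free_vars p).
Proof.
  induction p; simpl; intros H.
  - induction l as [| [y | k] l IH]; simpl in *; try discriminate.
    + apply orb_true_iff in H. destruct H as [H | H].
      * left. symmetry. apply Nat.eqb_eq, H.
      * right. auto.
    + auto.
  - apply in_or_app. apply orb_true_iff in H. destruct H; auto.
  - apply in_or_app. apply orb_true_iff in H. destruct H; auto.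
  - discriminate.
  - destruct (Nat.eqb x n); [discriminate | auto].
  - destruct (Nat.eqb x n); [discriminate | auto].
Qed.

Lemma free_in_close x l p :
  free_in x (close l p) = true -> free_in x p = true /\ ~ In x l.
Proof.
  induction l as [| y l IH]; simpl; intros H; [auto |].
  destruct (Nat.eqb_spec x y); [discriminate |].
  destruct (IH H) as [Hp Hl]. split; [exact Hp |]. intros [-> | Hin]; auto.
Qed.

Lemma sentence_closure p : sentence (closure p).
Proof.
  intros x. destruct (free_in x (closure p)) eqn:E; [| reflexivity].
  destruct (free_in_close _ _ _ E) as [Hp Hnot].
  exfalso. apply Hnot, in_free_vars, Hp.
Qed.

Lemma vee_close_l G l a b :
  sentence a -> prv G (fvee b a) -> prv G (fvee (close l b) a).
Proof.
  intros Ha H. induction l as [| x l IH]; simpl; [exact H |].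
  apply (prv_mp _ _ _ (prv_gen _ x _ IH)), prv_ax, ax_lin, Ha.
Qed.

Theorem mainTheorem3 (G : theory) (alpha phi psi beta : form) :
  sentence alpha ->
  prv (add G alpha) phi ->
  prv (add G beta) psi ->
  prv (add G (fvee alpha beta)) (fvee phi psi).
Proof.
  intros Ha Hphi Hpsi.
  set (T := add G (fvee alpha beta)).
  set (phi' := closure phi). set (beta' := closure beta).
  assert (Hab' : prv T (fvee alpha beta')).
  { apply (prv_mp _ (fvee beta' alpha)); [| apply vee_comm].
    apply vee_close_l; [exact Ha |].
    apply (prv_mp _ _ _ (prv_add_new _ _)), vee_comm. }
  assert (Hphi'beta' : prv T (fvee phi' beta')).
  { apply (prv_add_cut _ _ _ _ (prv_add_vee _ _ _ _ (sentence_closure beta)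
                                  (close_intro _ _ _ Hphi))), Hab'. }
  assert (Hpsi' : prv (add G beta') psi).
  { apply (prv_add_cut _ _ _ _ Hpsi).
    apply (prv_mp _ _ _ (prv_add_new _ _)), close_elim. }
  assert (Hpsiphi' : prv T (fvee psi phi')).
  { apply (prv_add_cut _ _ _ _ (prv_add_vee _ _ _ _ (sentence_closure phi) Hpsi')).
    apply (prv_mp _ _ _ Hphi'beta'), vee_comm. }
  apply (prv_mp _ (fvee phi' psi)).
  - apply (prv_mp _ _ _ Hpsiphi'), vee_comm.
  - apply vee_mono_l, close_elim.
Qed.
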